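(* Let $d$ be a prime and $\omega=e^{2\pi i/d}$. For each $l\in\{0,1,\dots,d-1\}$ (identified with $\mathbb{Z}_d$) choose $\theta(l)\in U(1)$ with $\theta(l)^d=\omega^l$ (for instance $\theta(l)=e^{2\pi i l/d^2}$), and define the unitary $M(l)$ on $\mathbb{C}^d$ by $M(l)|q\rangle=\theta(l)\,\omega^{l q^{d-1}}|q+1\rangle$ for $q\in\{0,\dots,d-1\}$ (addition in $q+1$ modulo $d$). Let $|\psi\rangle=\frac{1}{\sqrt d}\sum_{q=0}^{d-1}|q\rangle\otimes|q\rangle\otimes|q\rangle$. For an input $\mathbf{i}=(i_1,i_2)\in\mathbb{Z}_d^2$ set $l_1(\mathbf{i})=i_1$, $l_2(\mathbf{i})=i_2$, $l_3(\mathbf{i})=-i_1-i_2$ (in $\mathbb{Z}_d$), and consider the deterministic, non-adaptive measurement-based computation with $\mathbb{Z}_d$-linear side-processing in which, on input $\mathbf{i}$, the operator $M(l_1(\mathbf{i}))\otimes M(l_2(\mathbf{i}))\otimes M(l_3(\mathbf{i}))$ is measured on $|\psi\rangle$, with output $o(\mathbf{i})\in\mathbb{Z}_d$ determined by $M(l_1(\mathbf{i}))\otimes M(l_2(\mathbf{i}))\otimes M(l_3(\mathbf{i}))|\psi\rangle=\omega^{o(\mathbf{i})}|\psi\rangle$. Then this computation is contextual: there exist no functions $m_1,m_2,m_3:\mathbb{Z}_d\to\mathbb{Z}_d$ such that $o(\mathbf{i})=m_1(l_1(\mathbf{i}))+m_2(l_2(\mathbf{i}))+m_3(l_3(\mathbf{i}))\bmod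 d$ for all $\mathbf{i}\in\mathbb{Z}_d^2$.
   Context: The state $|\psi\rangle$ is a common eigenvector of all the operators $M(l_1(\mathbf{i}))\otimes M(l_2(\mathbf{i}))\otimes M(l_3(\mathbf{i}))$, with eigenvalues that are $d$-th roots of unity, so $o:\mathbb{Z}_d^2\to\mathbb{Z}_d$ is well defined and the computation is deterministic. A (deterministic) noncontextual hidden variable model for the computation is an assignment of outcomes $m_k(l)\in\mathbb{Z}_d$ to each local measurement $M(l)$ on qudit $k$, independent of the input, such that the output equals the sum modulo $d$ of the local outcomes of the measurements performed; the computation is called contextual if no such model exists. *)

From mathcomp Require Import all_boot all_order all_algebra.
From mathcomp Require Import algC.
Set Implicit Arguments. Unset Strict Implicit. Unset Printing Implicit Defensive.
Import Order.TTheory GRing.Theory Num.Theory.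
Local Open Scope ring_scope.

(* omega = e^{2 pi i / d}: d.-root (-1) is the d-th root of -1 of minimal
   nonnegative argument, i.e. e^{i pi / d}; its square is e^{2 pi i / d}. *)
Definition omega (d : nat) : algC := (d.-root (-1)) ^+ 2.

(* Matrix entries <a| M(l) |q> of the qudit operator
   M(l)|q> = theta(l) omega^{l q^{d-1}} |q+1>,  with arithmetic in Z_d. *)
Definition Mop (d : nat) (theta : 'Z_d -> algC) (l : 'Z_d) (a q : 'Z_d) : algC :=
  if a == q + 1 then theta l * omega d ^+ (nat_of_ord (l * q ^+ d.-1)) else 0.

Definition state3 (d : nat) := 'Z_d -> 'Z_d -> 'Z_d -> algC.

Definition psi (d : nat) : state3 d :=
  fun q1 q2 q3 => if (q1 == q2) && (q2 == q3) then (sqrtC d%:R)^-1 else 0.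

Definition tens3 (d : nat) (A B C : 'Z_d -> 'Z_d -> algC) (v : state3 d) : state3 d :=
  fun a b c => \sum_(q1 : 'Z_d) \sum_(q2 : 'Z_d) \sum_(q3 : 'Z_d)
                 A a q1 * B b q2 * C c q3 * v q1 q2 q3.

Definition l1 (d : nat) (i : 'Z_d * 'Z_d) : 'Z_d := i.1.
Definition l2 (d : nat) (i : 'Z_d * 'Z_d) : 'Z_d := i.2.
Definition l3 (d : nat) (i : 'Z_d * 'Z_d) : 'Z_d := - i.1 - i.2.

Definition is_output (d : nat) (theta : 'Z_d -> algC) (o : 'Z_d * 'Z_d -> 'Z_d) : Prop :=
  forall (i : 'Z_d * 'Z_d) (a b c : 'Z_d),
    tens3 (Mop theta (l1 i)) (Mop theta (l2 i)) (Mop theta (l3 i)) (@psi d) a b c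
    = omega d ^+ (nat_of_ord (o i)) * @psi d a b c.

Definition has_ncHVM (d : nat) (o : 'Z_d * 'Z_d -> 'Z_d) : Prop :=
  exists m1 m2 m3 : 'Z_d -> 'Z_d,
    forall i : 'Z_d * 'Z_d, o i = m1 (l1 i) + m2 (l2 i) + m3 (l3 i).

(* On |q>|q>|q> the three shifts pick up the phase
   theta(l1) theta(l2) theta(l3) omega^{(l1 + l2 + l3) q^{d-1}}, and l1 + l2 + l3 = 0,
   so |psi> is an eigenvector with omega^{o(i)} = theta(i1) theta(i2) theta(-i1-i2).
   Fixing i1 = x and multiplying over i2 gives omega^x (prod_y theta y)^2, because
   theta(x)^d = omega^x; this depends on x.  A noncontextual model would instead give
   omega^(d m1(x) + sum m2 + sum m3) with d m1(x) = 0 in Z_d, independent of x. *)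
From mathcomp Require Import all_boot all_order all_algebra.
From mathcomp Require Import algC.
Set Implicit Arguments. Unset Strict Implicit. Unset Printing Implicit Defensive.
Import Order.TTheory GRing.Theory Num.Theory.
Local Open Scope ring_scope.

Lemma prime_prim_root (R : nzRingType) (p : nat) (z : R) :
  prime p -> z ^+ p = 1 -> z != 1 -> p.-primitive_root z.
Proof.
move=> p_pr zp1 z_neq1.
have [m m_prim m_dvd] := prim_order_exists (prime_gt0 p_pr) zp1.
case/primeP: p_pr => _ /(_ m m_dvd) /orP[/eqP m1 | /eqP <- //].
by move: z_neq1; rewrite -[z]expr1 -m1 (prim_expr_order m_prim) eqxx.
Qed.

Lemma omega_expr_order (d : nat) : (0 < d)%N -> omega d ^+ d = 1.
Proof. by move=> d_gt0; rewrite /omega exprAC rootCK // sqrrN expr1n. Qed.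

Lemma omega_neq1 (d : nat) : (1 < d)%N -> omega d != 1.
Proof.
move=> d_gt1; rewrite /omega sqrf_eq1 negb_or; apply/andP; split.
  by rewrite rootC_eq1 ?(ltnW d_gt1) // eqNr oner_eq0.
by apply: contraFN (rootC_lt0 (-1 : algC) d_gt1) => /eqP->; rewrite ltrN10.
Qed.

Lemma omega_prim_root (d : nat) : prime d -> d.-primitive_root (omega d).
Proof.
move=> d_pr; apply: prime_prim_root => //.
  exact/omega_expr_order/prime_gt0.
exact/omega_neq1/prime_gt1.
Qed.

Definition phase (d : nat) (k : 'Z_d) : algC := omega d ^+ k.

Section Phase.

Variable d : nat.
Hypothesis d_prime : prime d.

Let d_gt1 : (1 < d)%N := prime_gt1 d_prime.

Lemma phase_inZp n : phase (inZp n : 'Z_d) = omega d ^+ n.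
Proof. by rewrite /phase /= Zp_cast // (prim_expr_mod (omega_prim_root d_prime)). Qed.

Lemma phase0 : phase (0 : 'Z_d) = 1.
Proof. exact: expr0. Qed.

Lemma phaseD (a b : 'Z_d) : phase (a + b) = phase a * phase b.
Proof. by rewrite -exprD -phase_inZp. Qed.

Lemma phase_sum (I : Type) (r : seq I) (P : pred I) (F : I -> 'Z_d) :
  \prod_(i <- r | P i) phase (F i) = phase (\sum_(i <- r | P i) F i).
Proof. by rewrite (big_morph _ phaseD phase0). Qed.

Lemma phase_inj : injective (@phase d).
Proof.
move=> a b /eqP; rewrite (eq_prim_root_expr (omega_prim_root d_prime)).
have val_lt_d (k : 'Z_d) : (k < d)%N by rewrite -[d in (_ < d)%N](Zp_cast d_gt1).
by rewrite !modn_small // => /eqP/val_inj.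
Qed.

Lemma phase_surj (x : algC) : x ^+ d = 1 -> exists k : 'Z_d, phase k = x.
Proof.
case/(prim_rootP (omega_prim_root d_prime)) => i ->.
by exists (inZp i); rewrite phase_inZp.
Qed.

Definition phase_log (x : algC) : 'Z_d := odflt 0 [pick k | phase k == x].

Lemma phase_logK (x : algC) : x ^+ d = 1 -> phase (phase_log x) = x.
Proof.
move=> /phase_surj[k phase_k]; rewrite /phase_log.
by case: pickP => [j /eqP // | /(_ k)]; rewrite phase_k eqxx.
Qed.

End Phase.

Lemma sumr_supp1 (R : nmodType) (I : finType) (i0 : I) (F : I -> R) :
  (forall i, i != i0 -> F i = 0) -> \sum_i F i = F i0.
Proof. by move=> F0; rewrite (bigD1 i0) //= big1 ?addr0. Qed.

Lemma card_Zp_ord (p : nat) : (1 < p)%N -> #|'Z_p| = p.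
Proof. by move=> p_gt1; rewrite card_ord Zp_cast. Qed.

Lemma sum_l1_l2_l3 (d : nat) (i : 'Z_d * 'Z_d) : l1 i + l2 i + l3 i = 0.
Proof. by rewrite /l3 -opprD subrr. Qed.

Lemma big_l3_reindex (d : nat) (R : Type) (idx : R) (op : Monoid.com_law idx)
    (x : 'Z_d) (F : 'Z_d -> R) :
  \big[op/idx]_y F (l3 (x, y)) = \big[op/idx]_y F y.
Proof. by rewrite [RHS](reindex_inj (subrI (- x))). Qed.

Section ShiftOperator.

Variables (d : nat) (theta : 'Z_d -> algC).

Lemma MopE l (a q : 'Z_d) :
  Mop theta l a q = if a == q + 1 then theta l * phase (l * q ^+ d.-1) else 0.
Proof. by []. Qed.

Lemma Mop_eq0 l (a q : 'Z_d) : q != a - 1 -> Mop theta l a q = 0.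
Proof. by move=> /negbTE q_neq; rewrite MopE -subr_eq eq_sym q_neq. Qed.

Lemma tens3_Mop la lb lc (v : state3 d) a b c :
  tens3 (Mop theta la) (Mop theta lb) (Mop theta lc) v a b c =
  Mop theta la a (a - 1) * Mop theta lb b (b - 1) * Mop theta lc c (c - 1) *
    v (a - 1) (b - 1) (c - 1).
Proof.
rewrite /tens3 (sumr_supp1 (i0 := a - 1)) => [|q1 q1_neq]; last first.
  by rewrite big1 // => q2 _; rewrite big1 // => q3 _; rewrite Mop_eq0 // !mul0r.
rewrite (sumr_supp1 (i0 := b - 1)) => [|q2 q2_neq]; last first.
  by rewrite big1 // => q3 _; rewrite (Mop_eq0 _ q2_neq) mulr0 !mul0r.
rewrite (sumr_supp1 (i0 := c - 1)) // => q3 q3_neq.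
by rewrite (Mop_eq0 _ q3_neq) mulr0 mul0r.
Qed.

End ShiftOperator.

Section Contextuality.

Variables (d : nat) (theta : 'Z_d -> algC).
Hypothesis d_prime : prime d.
Hypothesis theta_U1 : forall l, `|theta l| = 1.
Hypothesis theta_root : forall l, theta l ^+ d = phase l.

Let d_gt1 : (1 < d)%N := prime_gt1 d_prime.

Lemma tens3_Mop_psi la lb lc a b c : la + lb + lc = 0 ->
  tens3 (Mop theta la) (Mop theta lb) (Mop theta lc) (@psi d) a b c =
  theta la * theta lb * theta lc * psi a b c.
Proof.
move=> l_eq0; rewrite tens3_Mop !MopE !subrK !eqxx /psi !(can_eq (subrK 1)).
have [/andP[/eqP<- /eqP<-] | _] := boolP ((a == b) && (b == c)); last by rewrite !mulr0.
rewrite [X in X * _ * _]mulrACA [X in X * _]mulrACA -!phaseD // -!mulrDl l_eq0.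
by rewrite mul0r phase0 mulr1.
Qed.

Definition eigenvalue (i : 'Z_d * 'Z_d) : algC :=
  theta (l1 i) * theta (l2 i) * theta (l3 i).

Lemma eigenvalue_unity i : eigenvalue i ^+ d = 1.
Proof. by rewrite !exprMn !theta_root -!phaseD // sum_l1_l2_l3 phase0. Qed.

Lemma eigenvalue_output : is_output theta (fun i => phase_log d (eigenvalue i)).
Proof.
move=> i a b c; rewrite tens3_Mop_psi ?sum_l1_l2_l3 //.
by rewrite -[omega d ^+ _]/(phase _) phase_logK ?eigenvalue_unity.
Qed.

Lemma output_phase o i : is_output theta o -> phase (o i) = eigenvalue i.
Proof.
move=> o_out; have psi0 : @psi d 0 0 0 != 0.
  by rewrite /psi eqxx invr_eq0 sqrtC_eq0 pnatr_eq0 -lt0n prime_gt0.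
by apply: (mulIf psi0); rewrite /phase -o_out tens3_Mop_psi ?sum_l1_l2_l3.
Qed.

Lemma output_row_phase o x : is_output theta o ->
  phase (\sum_y o (x, y)) = phase x * (\prod_y theta y) ^+ 2.
Proof.
move=> o_out; rewrite -phase_sum //; under eq_bigr do rewrite output_phase //.
rewrite !big_split /= prodr_const card_Zp_ord // theta_root.
by rewrite big_l3_reindex -mulrA.
Qed.

Lemma ncHVM_row_sum (o : 'Z_d * 'Z_d -> 'Z_d) (m1 m2 m3 : 'Z_d -> 'Z_d) x :
  (forall i, o i = m1 (l1 i) + m2 (l2 i) + m3 (l3 i)) ->
  \sum_y o (x, y) = \sum_y m2 y + \sum_y m3 y.
Proof.
move=> o_hvm; under eq_bigr do rewrite o_hvm.
rewrite !big_split /= sumr_const card_Zp_ord // -mulr_natr pchar_Zp //.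
by rewrite mulr0 add0r big_l3_reindex.
Qed.

Lemma output_not_ncHVM o : is_output theta o -> ~ has_ncHVM o.
Proof.
move=> o_out [m1 [m2 [m3 o_hvm]]].
have row_phase (x : 'Z_d) :
    phase (\sum_y m2 y + \sum_y m3 y) = phase x * (\prod_y theta y) ^+ 2.
  by rewrite -(ncHVM_row_sum x o_hvm) output_row_phase.
have theta_prod_neq0 : (\prod_y theta y) ^+ 2 != 0.
  rewrite expf_neq0 //; apply/prodf_neq0 => y _.
  by rewrite -normr_eq0 theta_U1 oner_eq0.
have /(phase_inj d_prime) : phase (1 : 'Z_d) = phase (0 : 'Z_d).
  by apply: (mulIf theta_prod_neq0); rewrite -!row_phase.
by move/eqP; rewrite oner_eq0.
Qed.

End Contextuality.

Theorem theorem1 (d : nat) (d_prime : prime d) (theta : 'Z_d -> algC)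
    (theta_U1 : forall l : 'Z_d, `|theta l| = 1)
    (theta_root : forall l : 'Z_d, theta l ^+ d = omega d ^+ (nat_of_ord l)) :
  (exists o : 'Z_d * 'Z_d -> 'Z_d, is_output theta o) /\
  (forall o : 'Z_d * 'Z_d -> 'Z_d, is_output theta o -> ~ has_ncHVM o).
Proof.
split; first by eexists; exact: eigenvalue_output.
exact: output_not_ncHVM.
Qed.
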